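(* Suppose each local cost $f_i$ is $L_i$-smooth for some $L_i>0$, the aggregate cost is $f(x)=g(Hx)$ for an $\alpha$-strongly convex ($\alpha>0$), $\mathbf{L}$-smooth $g:\mathbb{R}^m\to\mathbb{R}$ and $H\in\mathbb{R}^{m\times p}$, $f$ has a minimizer, and $D:=\sup_{x\in X^*}(\sum_{j=1}^n\|\nabla f_j(x)\|^2)^{1/2}<\infty$. Let $L=\max_iL_i$ and $C_2=\frac{2\mathbf{L}\alpha c_H}{\mathbf{L}+\alpha}$. Assume $t(k)=J\in\mathbb{N}$ for all $k\ge0$ and $$0<\mu\le\min\Big\{\frac{2C_H}{\mathbf{L}+\alpha},\ \frac{C_2}{C_2+L(1+\sqrt2)}\cdot\frac{1-\beta^J}{L\beta^J}\Big\}.$$ Set $A_0=\|\bar{\mathbf{x}}_0-[\bar{\mathbf{x}}_0]\|$, $B_0=\|\bar{\mathbf{x}}_0-\mathbf{x}_0\|$, $\gamma=\frac{1-\sqrt{1-C_2\mu}}{\mu L}$ and $$R=\max\Big\{A_0,\ B_0/\gamma,\ \frac{\mu D\beta^J}{\gamma-(\mu L+\gamma(1+\mu L))\beta^J}\Big\}.$$ Then for the NEAR-DGD$^+$ iterates and all $k\ge0$, $$\|\bar{\mathbf{x}}_{k+1}-[\bar{\mathbf{x}}_{k+1}]\|\le(\sqrt{1-C_2\mu})^k(A_0+\mu LB_0)+\frac{\mu L\beta^J}{1-\beta^J}\Big(\frac{\mu(2LR+D)}{1-\sqrt{1-C_2\mu}}+B_0\Big)$$ and $$\|\bar{\mathb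f{x}}_k-\mathbf{x}_k\|\le(\beta^J)^kB_0+\frac{\mu\beta^J(2LR+D)}{1-\beta^J}.$$
   Context: Let $n,p\in\mathbb{N}$. $W$ is an $n\times n$ doubly stochastic matrix whose associated directed graph is strongly connected with a self-loop at every vertex; $1_n$ is the all-ones vector and $\beta\in[0,1)$ is the spectral norm of $W-\frac1n1_n1_n^\top$. $f_i:\mathbb{R}^p\to\mathbb{R}$, $f=\frac1n\sum_if_i$, $X^*$ the set of minimizers of $f$ (closed convex since $f$ is convex) and $[x]$ the Euclidean projection of $x$ onto $X^*$; for $\mathbf{z}=1_n\otimes z$ we write $[\mathbf{z}]=1_n\otimes[z]$. $h$ is $L$-smooth if $\|\nabla h(x)-\nabla h(y)\|\le L\|x-y\|$; $\alpha$-strongly convex if $h(y)\ge h(x)+\langle y-x,\nabla h(x)\rangle+\frac\alpha2\|y-x\|^2$. $c_H>0$ is a Hoffman coefficient: $\|Hx-H[x]\|^2\ge c_H\|x-[x]\|^2$ for all $x$; $C_H=1/\|H\|_2^2$ with $\|H\|_2$ the operator norm. NEAR-DGD$^+$: $\mathbf{x}_{k+1}=(W^{t(k)}\otimes I_p)(\mathbf{x}_k-\mu\nabla F(\mathbf{x}_k))$ where $\nabla F(\mathbf{x})=(\nabla f_1(x_1)^\top,\dots,\nabla f_n(x_n)^\top)^\top$ for $\mathbf{x}=(x_1^\top,\dots,x_n^\top)^\top$, $\otimes$ the Kronecker product; $\bar x_k=\frac1n\sum_ix_{i,k}$ and $\bar{\mathbf{x}}_k=1_n\otimes\bar x_k$.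 Norms are Euclidean. *)

From HB Require Import structures.
From mathcomp Require Import all_boot all_order all_algebra.
From mathcomp Require Import boolp classical_sets reals.
Set Implicit Arguments. Unset Strict Implicit. Unset Printing Implicit Defensive.
Import Order.TTheory GRing.Theory Num.Theory.
Local Open Scope ring_scope.
Local Open Scope classical_set_scope.

Section Defs.
Variable R : realType.

Definition dotv (p : nat) (u v : 'cV[R]_p) : R := \sum_(i < p) u i 0 * v i 0.
Definition norm2 (p : nat) (u : 'cV[R]_p) : R := Num.sqrt (dotv u u).

(* Euclidean norm of a stacked vector x = (x_1^T, ..., x_n^T)^T in R^{np} *)
Definition snorm (n p : nat) (x : 'I_n -> 'cV[R]_p) : R :=
  Num.sqrt (\sum_(i < n) norm2 (x i) ^+ 2).

Definition opnorm (m p : nat) (A : 'M[R]_(m, p)) : R :=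
  sup [set norm2 (A *m x) | x in [set x : 'cV[R]_p | norm2 x <= 1]].

Definition is_gradient (p : nat) (h : 'cV[R]_p -> R) (g : 'cV[R]_p -> 'cV[R]_p) :=
  forall x (eps : R), 0 < eps -> exists2 delta : R, 0 < delta &
    forall y, norm2 (y - x) < delta ->
      `|h y - h x - dotv (g x) (y - x)| <= eps * norm2 (y - x).

Definition L_smooth (p : nat) (h : 'cV[R]_p -> R) (gh : 'cV[R]_p -> 'cV[R]_p) (L : R) :=
  is_gradient h gh /\ forall x y, norm2 (gh x - gh y) <= L * norm2 (x - y).

Definition strongly_convex (p : nat) (h : 'cV[R]_p -> R) (gh : 'cV[R]_p -> 'cV[R]_p) (a : R) :=
  forall x y, h x + dotv (y - x) (gh x) + a / 2 * norm2 (y - x) ^+ 2 <= h y.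

Definition doubly_stochastic (n : nat) (W : 'M[R]_n) :=
  (forall i j, 0 <= W i j) /\ (forall i, \sum_j W i j = 1) /\ (forall j, \sum_i W i j = 1).

Definition strongly_connected_selfloops (n : nat) (W : 'M[R]_n) :=
  (forall i, 0 < W i i) /\
  (forall i j, connect (fun a b : 'I_n => 0 < W a b) i j).

Definition minimizers (p : nat) (f : 'cV[R]_p -> R) : set 'cV[R]_p :=
  [set x | forall y, f x <= f y].

Definition is_proj (p : nat) (X : set 'cV[R]_p) (x y : 'cV[R]_p) :=
  X y /\ forall z, X z -> norm2 (x - y) <= norm2 (x - z).

Definition avg (n p : nat) (x : 'I_n -> 'cV[R]_p) : 'cV[R]_p :=
  (n%:R)^-1 *: \sum_(i < n) x i.

(* NEAR-DGD+ : x_{k+1} = (W^{t(k)} (x) I_p)(x_k - mu grad F(x_k)) *)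
Definition near_dgd_plus (n p : nat) (W : 'M[R]_n) (t : nat -> nat) (mu : R)
    (gf : 'I_n -> 'cV[R]_p -> 'cV[R]_p) (x : nat -> 'I_n -> 'cV[R]_p) :=
  forall k i, x k.+1 i = \sum_(j < n) (W ^+ t k) i j *: (x k j - mu *: gf j (x k j)).

End Defs.

(* The averaged iterate takes an inexact gradient step on f = g o H.  The exact step
   contracts the distance to X* by q = sqrt (1 - C2 mu): this follows from the Hoffman
   bound and the co-coercivity of the gradient of the strongly convex, smooth g.  The
   inexactness is at most mu L times the consensus error.  Mixing J times with W contracts
   the consensus error by beta^J, up to the perturbation mu (L (A + B) + D) of the gradient
   step.  By the choice of R and of the step size, the coupled recursions
   A' <= q A + mu L B and B' <= beta^J (B + mu (L (A + B) + D)) keep (A, B) inside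
   [0, R] x [0, gamma R], and unrolling them gives both bounds. *)

From HB Require Import structures.
From mathcomp Require Import all_boot all_order all_algebra.
From mathcomp Require Import boolp classical_sets reals.
From mathcomp Require Import ring lra.
Import Order.TTheory GRing.Theory Num.Theory.
Local Open Scope ring_scope.
Local Open Scope classical_set_scope.
Set Implicit Arguments. Unset Strict Implicit. Unset Printing Implicit Defensive.

Section Euclid.
Variables (R : realType) (p : nat).
Implicit Types (a : R) (u v w : 'cV[R]_p).

Lemma dotvC u v : dotv u v = dotv v u.
Proof. by apply: eq_bigr => i _; rewrite mulrC. Qed.

Lemma dotvDl u v w : dotv (u + v) w = dotv u w + dotv v w.
Proof. by rewrite /dotv -big_split; apply: eq_bigr => i _; rewrite !mxE mulrDl. Qed.

Lemma dotvZl a u w : dotv (a *: u) w = a * dotv u w.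
Proof. by rewrite /dotv mulr_sumr; apply: eq_bigr => i _; rewrite !mxE mulrA. Qed.

Lemma dotvNl u w : dotv (- u) w = - dotv u w.
Proof. by rewrite -scaleN1r dotvZl mulN1r. Qed.

Lemma dotvBl u v w : dotv (u - v) w = dotv u w - dotv v w.
Proof. by rewrite dotvDl dotvNl. Qed.

Lemma dotvDr u v w : dotv w (u + v) = dotv w u + dotv w v.
Proof. by rewrite dotvC dotvDl !(dotvC w). Qed.

Lemma dotvZr a u w : dotv w (a *: u) = a * dotv w u.
Proof. by rewrite dotvC dotvZl dotvC. Qed.

Lemma dotvNr u w : dotv w (- u) = - dotv w u.
Proof. by rewrite dotvC dotvNl dotvC. Qed.

Lemma dotvBr u v w : dotv w (u - v) = dotv w u - dotv w v.
Proof. by rewrite dotvC dotvBl !(dotvC w). Qed.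

Lemma dotv0l w : dotv 0 w = 0.
Proof. by rewrite /dotv big1 // => i _; rewrite mxE mul0r. Qed.

Lemma dotv0r w : dotv w 0 = 0.
Proof. by rewrite dotvC dotv0l. Qed.

Lemma dotv_suml (I : finType) (F : I -> 'cV[R]_p) w :
  dotv (\sum_i F i) w = \sum_i dotv (F i) w.
Proof. by elim/big_rec2: _ => [|i a b _ <-]; rewrite ?dotv0l ?dotvDl. Qed.

Lemma dotvv_ge0 u : 0 <= dotv u u.
Proof. by apply: sumr_ge0 => i _; rewrite -expr2 sqr_ge0. Qed.

Lemma dotvv_eq0 u : dotv u u = 0 -> u = 0.
Proof.
move=> /eqP; rewrite psumr_eq0 => [/allP uu0|i _]; last by rewrite -expr2 sqr_ge0.
apply/matrixP => i j; rewrite (ord1 j) mxE.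
by have /implyP/(_ isT) := uu0 i (mem_index_enum i); rewrite mulf_eq0 orbb => /eqP.
Qed.

Lemma norm2_ge0 u : 0 <= norm2 u.
Proof. exact: sqrtr_ge0. Qed.

Lemma norm2_sqr u : norm2 u ^+ 2 = dotv u u.
Proof. by rewrite sqr_sqrtr // dotvv_ge0. Qed.

Lemma norm2_eq0 u : norm2 u = 0 -> u = 0.
Proof. by move=> u0; apply: dotvv_eq0; rewrite -norm2_sqr u0 expr0n. Qed.

Lemma norm2_gt0 u : u != 0 -> 0 < norm2 u.
Proof. by move=> /eqP u0; rewrite lt0r norm2_ge0 andbT; apply/eqP => /norm2_eq0. Qed.

Lemma norm20 : norm2 (0 : 'cV[R]_p) = 0.
Proof. by rewrite /norm2 dotv0l sqrtr0. Qed.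

Lemma norm2Z a u : norm2 (a *: u) = `|a| * norm2 u.
Proof. by rewrite /norm2 dotvZl dotvZr mulrA -expr2 sqrtrM ?sqr_ge0 // sqrtr_sqr. Qed.

Lemma norm2N u : norm2 (- u) = norm2 u.
Proof. by rewrite -scaleN1r norm2Z normrN1 mul1r. Qed.

Lemma norm2_distC u v : norm2 (u - v) = norm2 (v - u).
Proof. by rewrite -norm2N opprB. Qed.

Lemma norm2_sqrB u v :
  norm2 (u - v) ^+ 2 = norm2 u ^+ 2 - 2 * dotv u v + norm2 v ^+ 2.
Proof. by rewrite !norm2_sqr dotvBl !dotvBr (dotvC v u); ring. Qed.

Lemma dotv_le u v : dotv u v <= norm2 u * norm2 v.
Proof.
have [->|u0] := eqVneq u 0; first by rewrite dotv0l norm20 mul0r.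
have [->|v0] := eqVneq v 0; first by rewrite dotv0r norm20 mulr0.
have uv0 : 0 < norm2 u * norm2 v by rewrite mulr_gt0 ?norm2_gt0.
(* Cauchy-Schwarz from 0 <= | |v| u - |u| v |^2. *)
have := dotvv_ge0 (norm2 v *: u - norm2 u *: v).
rewrite dotvBl !dotvBr !dotvZl !dotvZr -!norm2_sqr (dotvC v u) => h.
by rewrite -(ler_pM2l uv0); nra.
Qed.

Lemma normr_dotv_le u v : `|dotv u v| <= norm2 u * norm2 v.
Proof.
by rewrite ler_norml dotv_le andbT lerNl -dotvNl -(norm2N u) dotv_le.
Qed.

Lemma ler_norm2D u v : norm2 (u + v) <= norm2 u + norm2 v.
Proof.
rewrite -(ler_pXn2r (n := 2)) ?nnegrE ?addr_ge0 ?norm2_ge0 //.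
rewrite norm2_sqr dotvDl !dotvDr (dotvC v u) sqrrD !norm2_sqr.
by have := dotv_le u v; lra.
Qed.

Lemma ler_norm2_sum (I : finType) (F : I -> 'cV[R]_p) :
  norm2 (\sum_i F i) <= \sum_i norm2 (F i).
Proof.
elim/big_ind2: _ => [|a1 a2 b1 b2 h1 h2|//]; first by rewrite norm20.
exact: le_trans (ler_norm2D _ _) (lerD h1 h2).
Qed.

Lemma dotv_trmxl m (A : 'M[R]_(m, p)) (z : 'cV[R]_m) u :
  dotv (A^T *m z) u = dotv z (A *m u).
Proof.
rewrite /dotv; under eq_bigr => i _ do rewrite !mxE big_distrl /=.
rewrite exchange_big /=; apply: eq_bigr => j _.
by rewrite !mxE big_distrr /=; apply: eq_bigr => i _; rewrite !mxE; ring.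
Qed.

End Euclid.

Lemma norm2_col_le (R : realType) n (a b : 'I_n -> R) :
  (forall i, 0 <= a i <= b i) -> norm2 (\col_i a i) <= norm2 (\col_i b i).
Proof.
move=> ab; rewrite ler_sqrt ?dotvv_ge0 //; apply: ler_sum => i _; rewrite !mxE.
by have /andP[a0 le_ab] := ab i; rewrite -!expr2 ler_pXn2r // nnegrE (le_trans a0).
Qed.

Section Stacked.
Variables (R : realType) (n p : nat).
Implicit Types (z w : 'I_n -> 'cV[R]_p).

Lemma snormE z : snorm z = norm2 (\col_i norm2 (z i)).
Proof. by congr Num.sqrt; apply: eq_bigr => i _; rewrite !mxE expr2. Qed.

Lemma snorm_ge0 z : 0 <= snorm z.
Proof. exact: sqrtr_ge0. Qed.

Lemma snorm_le z (c : 'I_n -> R) :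
  (forall i, norm2 (z i) <= c i) -> snorm z <= norm2 (\col_i c i).
Proof. by move=> zc; rewrite snormE; apply: norm2_col_le => i; rewrite norm2_ge0 zc. Qed.

Lemma snormD z w : snorm (fun i => z i + w i) <= snorm z + snorm w.
Proof.
apply: le_trans (snorm_le (fun i => ler_norm2D (z i) (w i))) _.
rewrite !snormE; set c := \col_i _; have -> : c = \col_i norm2 (z i) + \col_i norm2 (w i).
  by apply/matrixP => i j; rewrite !mxE.
exact: ler_norm2D.
Qed.

Lemma snormZ (c : R) z : snorm (fun i => c *: z i) = `|c| * snorm z.
Proof.
rewrite !snormE -[`|c|]normr_id -norm2Z; congr (norm2 _); apply/matrixP => i j.
by rewrite !mxE norm2Z.
Qed.

Lemma snormN z : snorm (fun i => - z i) = snorm z.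
Proof.
by rewrite -[RHS]mul1r -normrN1 -snormZ; congr snorm; apply: funext => i; rewrite scaleN1r.
Qed.

Lemma snorm_distC z w : snorm (fun i => z i - w i) = snorm (fun i => w i - z i).
Proof. by rewrite -snormN; congr snorm; apply: funext => i; rewrite opprB. Qed.

Lemma snorm_lipschitz z w (K : R) : 0 <= K ->
  (forall i, norm2 (z i) <= K * norm2 (w i)) -> snorm z <= K * snorm w.
Proof.
move=> K0 zw; apply: le_trans (snorm_le zw) _.
have -> : \col_i (K * norm2 (w i)) = K *: \col_i norm2 (w i).
  by apply/matrixP => i j; rewrite !mxE.
by rewrite norm2Z ger0_norm // snormE.
Qed.

Lemma snorm_cst (v : 'cV[R]_p) : snorm (fun _ : 'I_n => v) = Num.sqrt n%:R * norm2 v.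
Proof.
rewrite /snorm sumr_const card_ord -[_ *+ n]mulr_natr sqrtrM ?sqr_ge0 //.
by rewrite sqrtr_sqr ger0_norm ?norm2_ge0 // mulrC.
Qed.

Lemma sum_norm2_le z : \sum_i norm2 (z i) <= Num.sqrt n%:R * snorm z.
Proof.
have := dotv_le (\col_i norm2 (z i)) (\col_(i < n) (1 : R)).
rewrite -snormE mulrC; congr (_ <= _ * _).
  by apply: eq_bigr => i _; rewrite !mxE mulr1.
rewrite /norm2 /dotv (eq_bigr (fun=> 1)) ?sumr_const ?card_ord //.
by move=> i _; rewrite mxE mulr1.
Qed.

Lemma sqrtn_norm2_avg_le z : Num.sqrt n%:R * norm2 (avg z) <= snorm z.
Proof.
have := sqrtr_ge0 (n%:R : R); rewrite le_eqVlt => /orP[/eqP <-|sn_gt0].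
  by rewrite mul0r snorm_ge0.
rewrite norm2Z ger0_norm ?invr_ge0 ?ler0n // mulrA.
have -> : Num.sqrt n%:R * (n%:R)^-1 = (Num.sqrt (n%:R : R))^-1 :> R.
  by rewrite -{2}[n%:R](@sqr_sqrtr _ n%:R) ?ler0n // invfM mulrA mulfV ?gt_eqF ?mul1r.
rewrite ler_pdivrMl //; exact: le_trans (ler_norm2_sum _) (sum_norm2_le z).
Qed.

Lemma snorm_sqr_cols z :
  snorm z ^+ 2 = \sum_(r < p) norm2 (\col_i z i r 0) ^+ 2.
Proof.
rewrite sqr_sqrtr ?sumr_ge0 // => [|i _]; last exact: sqr_ge0.
under eq_bigr => i _ do rewrite norm2_sqr.
under [RHS]eq_bigr => r _ do rewrite norm2_sqr.
rewrite /dotv exchange_big /=; apply: eq_bigr => r _; apply: eq_bigr => i _.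
by rewrite !mxE.
Qed.

End Stacked.

Section OperatorNorm.
Variables (R : realType) (m p : nat) (A : 'M[R]_(m, p)).

Local Notation unit_ball_image :=
  [set norm2 (A *m x) | x in [set x : 'cV[R]_p | norm2 x <= 1]].

Let unit_ball_image0 : unit_ball_image 0.
Proof. by exists 0; rewrite /= ?norm20 ?ler01 // mulmx0 norm20. Qed.

Lemma has_sup_opnorm : has_sup unit_ball_image.
Proof.
split; first by exists 0.
exists (Num.sqrt (\sum_i norm2 (\col_j A i j) ^+ 2)) => _ [x /= x1 <-].
rewrite ler_sqrt ?sumr_ge0 // => [|i _]; last exact: sqr_ge0.
apply: ler_sum => i _; rewrite -expr2.
have -> : (A *m x) i 0 = dotv (\col_j A i j) x.
  by rewrite !mxE; apply: eq_bigr => j _; rewrite !mxE.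
rewrite -ler_sqrt ?sqr_ge0 // !sqrtr_sqr (ger0_norm (norm2_ge0 _)).
apply: le_trans (normr_dotv_le _ _) _.
by rewrite ler_piMr ?norm2_ge0.
Qed.

Lemma opnorm_ge0 : 0 <= opnorm A.
Proof. exact (sup_upper_bound has_sup_opnorm unit_ball_image0). Qed.

Lemma norm2_mulmx_le x : norm2 (A *m x) <= opnorm A * norm2 x.
Proof.
have [->|x0] := eqVneq x 0; first by rewrite mulmx0 !norm20 mulr0.
have x_gt0 := norm2_gt0 x0; set u := (norm2 x)^-1 *: x.
have u_in : unit_ball_image (norm2 (A *m u)).
  by exists u; rewrite //= norm2Z ger0_norm ?invr_ge0 ?norm2_ge0 ?mulVf ?gt_eqF.
have := sup_upper_bound has_sup_opnorm u_in.
rewrite -scalemxAr norm2Z ger0_norm ?invr_ge0 ?norm2_ge0 // ler_pdivrMl // mulrC.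
exact.
Qed.

Lemma opnorm_gt0 : 0 < opnorm A -> exists x : 'cV[R]_p, A *m x != 0.
Proof.
move=> A_gt0; apply: contrapT => /forallNP A0.
suff : opnorm A <= 0 by rewrite leNgt A_gt0.
apply: ge_sup; first by exists 0.
by move=> _ [x _ <-]; move/negP/negPn/eqP: (A0 x) ->; rewrite norm20.
Qed.

Lemma norm2_trmx_mulmx_le z : norm2 (A^T *m z) <= opnorm A * norm2 z.
Proof.
have [->|w0] := eqVneq (A^T *m z) 0; first by rewrite norm20 mulr_ge0 ?opnorm_ge0 ?norm2_ge0.
rewrite -(ler_pM2l (norm2_gt0 w0)) -expr2 norm2_sqr dotv_trmxl.
apply: le_trans (dotv_le _ _) _.
have := ler_wpM2l (norm2_ge0 z) (norm2_mulmx_le (A^T *m z)); lra.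
Qed.

End OperatorNorm.

Section Mixing.
Variables (R : realType) (n p : nat).
Implicit Types (A B : 'M[R]_n) (z w : 'I_n -> 'cV[R]_p).

(* The action of A \otimes I_p on stacked vectors, as in near_dgd_plus. *)
Definition kronI A z : 'I_n -> 'cV[R]_p := fun i => \sum_j A i j *: z j.

Lemma kronI_mul A B z : kronI (A *m B) z = kronI A (kronI B z).
Proof.
apply: funext => i; rewrite /kronI.
under eq_bigr => j _ do rewrite mxE scaler_suml.
rewrite exchange_big /=; apply: eq_bigr => k _.
by rewrite scaler_sumr; apply: eq_bigr => j _; rewrite scalerA.
Qed.

Lemma kronI1 z : kronI 1%:M z = z.
Proof.
apply: funext => i; rewrite /kronI (bigD1 i) //= big1 => [|j ji].
  by rewrite mxE eqxx scale1r addr0.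
by rewrite mxE eq_sym (negbTE ji) scale0r.
Qed.

Lemma kronIBl A B z i : kronI (A - B) z i = kronI A z i - kronI B z i.
Proof. by rewrite /kronI -sumrB; apply: eq_bigr => j _; rewrite !mxE scalerBl. Qed.

Lemma kronIBr A z w i : kronI A (fun j => z j - w j) i = kronI A z i - kronI A w i.
Proof. by rewrite /kronI -sumrB; apply: eq_bigr => j _; rewrite scalerBr. Qed.

Lemma snorm_kronI_le A z : snorm (kronI A z) <= opnorm A * snorm z.
Proof.
rewrite -(ler_pXn2r (n := 2)) ?nnegrE ?mulr_ge0 ?snorm_ge0 ?opnorm_ge0 //.
rewrite exprMn !snorm_sqr_cols mulr_sumr; apply: ler_sum => r _.
have -> : \col_i kronI A z i r 0 = A *m \col_i z i r 0.
  by apply/matrixP => i j; rewrite !mxE summxE; apply: eq_bigr => k _; rewrite !mxE.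
rewrite -exprMn ler_pXn2r ?nnegrE ?mulr_ge0 ?norm2_ge0 ?opnorm_ge0 //.
exact: norm2_mulmx_le.
Qed.

Lemma kronI_avg z i : kronI ((n%:R)^-1 *: const_mx 1) z i = avg z.
Proof. by rewrite /kronI /avg scaler_sumr; apply: eq_bigr => j _; rewrite !mxE mulr1. Qed.

Lemma avgB z w : avg (fun i => z i - w i) = avg z - avg w.
Proof. by rewrite /avg sumrB scalerBr. Qed.

Lemma avg_cst (v : 'cV[R]_p) : (0 < n)%N -> avg (fun _ : 'I_n => v) = v.
Proof.
move=> n_gt0; rewrite /avg sumr_const card_ord -scaler_nat scalerA mulVf ?scale1r //.
by rewrite pnatr_eq0 -lt0n.
Qed.

Lemma snorm_kronI_pow_le A k z : snorm (kronI (A ^+ k) z) <= opnorm A ^+ k * snorm z.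
Proof.
elim: k => [|k IHk]; first by rewrite expr0 kronI1 mul1r.
rewrite exprS kronI_mul exprS -mulrA.
exact: le_trans (snorm_kronI_le _ _) (ler_wpM2l (opnorm_ge0 _) IHk).
Qed.

Variable W : 'M[R]_n.
Hypotheses (n_gt0 : (0 < n)%N) (W_ds : doubly_stochastic W).

Lemma kronI_cst (v : 'cV[R]_p) i : kronI W (fun _ => v) i = v.
Proof. by rewrite /kronI -scaler_suml W_ds.2.1 scale1r. Qed.

Lemma kronI_pow_cst k (v : 'cV[R]_p) : kronI (W ^+ k) (fun _ => v) = fun _ => v.
Proof.
elim: k => [|k IHk]; first by rewrite kronI1.
by rewrite exprS kronI_mul IHk; apply: funext => i; rewrite kronI_cst.
Qed.

Lemma avg_kronI z : avg (kronI W z) = avg z.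
Proof.
rewrite /avg /kronI exchange_big /=; congr (_ *: _); apply: eq_bigr => j _.
by rewrite -scaler_suml W_ds.2.2 scale1r.
Qed.

Lemma avg_kronI_pow k z : avg (kronI (W ^+ k) z) = avg z.
Proof. by elim: k => [|k IHk]; rewrite ?expr0 ?kronI1 // exprS kronI_mul avg_kronI. Qed.

Local Notation M := (W - (n%:R)^-1 *: const_mx 1).

Lemma kronI_consensus_pow k z :
  kronI (M ^+ k.+1) z = fun i => kronI (W ^+ k.+1) z i - avg z.
Proof.
elim: k => [|k IHk]; apply: funext => i.
  by rewrite !expr1 kronIBl kronI_avg.
rewrite exprS kronI_mul IHk kronIBr !kronIBl !kronI_avg kronI_cst avg_cst //.
by rewrite subrr subr0 avg_kronI_pow -kronI_mul mulmxE -exprS.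
Qed.

Lemma snorm_consensus_le J z (c : 'cV[R]_p) : (0 < J)%N ->
  snorm (fun i => avg (kronI (W ^+ J) z) - kronI (W ^+ J) z i)
    <= opnorm M ^+ J * snorm (fun i => z i - c).
Proof.
case: J => // J _; rewrite avg_kronI_pow -snormN.
have -> : (fun i => - (avg z - kronI (W ^+ J.+1) z i)) = kronI (M ^+ J.+1) (fun i => z i - c).
  apply: funext => i; rewrite kronIBr !kronI_consensus_pow kronI_pow_cst.
  by rewrite avg_cst // subrr subr0 opprB.
exact: snorm_kronI_pow_le.
Qed.

End Mixing.

Section Gradient.
Variables (R : realType) (p : nat).
Implicit Types (h : 'cV[R]_p -> R) (gh : 'cV[R]_p -> 'cV[R]_p).

Lemma is_gradient_comp m (g : 'cV[R]_m -> R) gg (A : 'M[R]_(m, p)) :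
  is_gradient g gg -> is_gradient (fun y => g (A *m y)) (fun y => A^T *m gg (A *m y)).
Proof.
move=> g_grad x e e_gt0; set K := opnorm A + 1.
have K_gt0 : 0 < K by rewrite ltr_wpDl ?opnorm_ge0.
have [d d_gt0 gd] := g_grad (A *m x) (e / K) (divr_gt0 e_gt0 K_gt0).
exists (d / K) => [|y yx]; first exact: divr_gt0.
have Ayx : norm2 (A *m (y - x)) <= K * norm2 (y - x).
  apply: le_trans (norm2_mulmx_le _ _) _.
  by apply: ler_wpM2r; [exact: norm2_ge0 | rewrite /K lerDl].
have Ayx_lt : norm2 (A *m y - A *m x) < d.
  by rewrite -mulmxBr; apply: le_lt_trans Ayx _; rewrite mulrC -ltr_pdivlMr.
rewrite dotv_trmxl mulmxBr; apply: le_trans (gd _ Ayx_lt) _; rewrite -mulmxBr.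
apply: le_trans (ler_wpM2l (ltW (divr_gt0 e_gt0 K_gt0)) Ayx) _.
by rewrite mulrA divfK ?gt_eqF.
Qed.

Lemma is_gradient_avg n (f : 'I_n -> 'cV[R]_p -> R) gf : (0 < n)%N ->
  (forall i, is_gradient (f i) (gf i)) ->
  is_gradient (fun y => (n%:R)^-1 * \sum_i f i y) (fun y => (n%:R)^-1 *: \sum_i gf i y).
Proof.
move=> n_gt0 f_grad x e e_gt0.
have fd : forall i, exists d : R, 0 < d /\ forall y, norm2 (y - x) < d ->
    `|f i y - f i x - dotv (gf i x) (y - x)| <= e * norm2 (y - x).
  by move=> i; have [d ? ?] := f_grad i x e e_gt0; exists d.
have [d d_gt0] := choice fd.
exists (\big[Num.min/1]_i d i) => [|y yx]; first by apply: lt_bigmin => // i _; case: (d_gt0 i).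
have n_pos : (0 : R) < n%:R by rewrite ltr0n.
rewrite dotvZl dotv_suml -!mulrBr -!sumrB normrM ger0_norm ?invr_ge0 ?ler0n //.
rewrite ler_pdivrMl //.
have -> : n%:R * (e * norm2 (y - x)) = \sum_(i < n) e * norm2 (y - x).
  by rewrite sumr_const card_ord mulr_natl.
apply: le_trans (ler_norm_sum _ _ _) (ler_sum _ _) => i _.
by apply: (d_gt0 i).2; apply: lt_le_trans yx (bigmin_le _ _ _).
Qed.

Lemma eq0_of_dotv_small (w : 'cV[R]_p) :
  (forall e, 0 < e -> exists2 d, 0 < d & forall v, norm2 v < d -> dotv w v <= e * norm2 v) ->
  w = 0.
Proof.
move=> small; apply/eqP; apply: contraT => w0; have w_gt0 := norm2_gt0 w0.
have [d d_gt0 wd] := small (norm2 w / 2) (divr_gt0 w_gt0 (ltr0Sn _ 1)).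
set t := d / (2 * norm2 w).
have t_gt0 : 0 < t by rewrite divr_gt0 ?mulr_gt0.
have tw : t * norm2 w = d / 2 by rewrite /t; field; rewrite gt_eqF.
have tw_d : norm2 (t *: w) < d by rewrite norm2Z gtr0_norm // tw; lra.
have := wd _ tw_d; rewrite dotvZr -norm2_sqr norm2Z gtr0_norm // expr2 mulrA tw.
by have := mulr_gt0 d_gt0 w_gt0; lra.
Qed.

Lemma is_gradient_unique h g1 g2 x : is_gradient h g1 -> is_gradient h g2 -> g1 x = g2 x.
Proof.
move=> h_g1 h_g2; apply/eqP; rewrite -subr_eq0; apply/eqP/eq0_of_dotv_small => e e_gt0.
have [d1 d1_gt0 hd1] := h_g1 x (e / 2) (divr_gt0 e_gt0 (ltr0Sn _ 1)).
have [d2 d2_gt0 hd2] := h_g2 x (e / 2) (divr_gt0 e_gt0 (ltr0Sn _ 1)).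
exists (Num.min d1 d2) => [|v]; first by rewrite lt_min d1_gt0.
rewrite lt_min => /andP[vd1 vd2].
have := hd1 (x + v); have := hd2 (x + v); rewrite addrC addKr dotvBl.
by move=> /(_ vd2) /ler_normlP [? ?] /(_ vd1) /ler_normlP [? ?]; lra.
Qed.

Lemma gradient_eq0_of_min h gh z : (forall y, h z <= h y) -> is_gradient h gh -> gh z = 0.
Proof.
move=> z_min h_grad; apply: eq0_of_dotv_small => e e_gt0.
have [d d_gt0 hd] := h_grad z e e_gt0; exists d => // v vd.
have := hd (z - v); rewrite addrAC subrr add0r norm2N dotvNr => /(_ vd) /ler_normlP [? ?].
by have := z_min (z - v); lra.
Qed.

End Gradient.

Section Descent.
Variable R : realType.

Lemma local_slope_le0_le (k : R -> R) :
  (forall t, 0 <= t <= 1 -> forall e, 0 < e -> exists2 d, 0 < d &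
     forall a b, 0 <= a -> a <= b -> b <= 1 -> a = t \/ b = t -> b - a < d ->
       k b - k a <= e * (b - a)) ->
  k 1 <= k 0.
Proof.
move=> slope; apply/ler_addgt0Pr => e e_gt0.
set S := [set t : R | 0 <= t <= 1 /\ k t <= k 0 + e * t].
have S0 : S 0 by split; rewrite ?lexx ?ler01 ?mulr0 ?addr0.
have S_sup : has_sup S by split; [exists 0 | exists 1 => t [/andP[]]].
set s := sup S.
have s0 : 0 <= s := sup_upper_bound S_sup S0.
have s1 : s <= 1 by apply: ge_sup; [exists 0 | move=> t [/andP[]]].
have s01 : 0 <= s <= 1 by rewrite s0 s1.
have [d d_gt0 sd] := slope s s01 e e_gt0.
have Ss : S s.
  split => //; have [a Sa] := sup_adherent d_gt0 S_sup; rewrite -/s => sa.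
  have as_ : a <= s := sup_upper_bound S_sup Sa.
  case: Sa => /andP[a0 _] ka.
  by have := sd a s a0 as_ s1 (or_intror erefl) ltac:(lra); lra.
have [s_lt1|s_ge1] := ltP s 1; last first.
  have s_eq1 : s = 1 by apply/le_anti; rewrite s1 s_ge1.
  by case: Ss; rewrite s_eq1 mulr1.
set s' := Num.min 1 (s + d / 2).
have ss' : s < s' by rewrite lt_min s_lt1 ltrDl divr_gt0.
have s'1 : s' <= 1 by rewrite ge_min lexx.
have s'd : s' <= s + d / 2 by rewrite ge_min lexx orbT.
have := sd s s' s0 (ltW ss') s'1 (or_introl erefl) ltac:(lra).
case: Ss => _ ks ks'.
have : S s' by split; [rewrite s'1 andbT; lra | lra].
by move/(sup_upper_bound S_sup); rewrite -/s; lra.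
Qed.

Lemma smooth_descent m (g : 'cV[R]_m -> R) gg Lg : 0 <= Lg -> L_smooth g gg Lg ->
  forall u w, g w <= g u + dotv (gg u) (w - u) + Lg / 2 * norm2 (w - u) ^+ 2.
Proof.
move=> Lg0 [g_grad gg_lip] u w; set d := w - u; set N := norm2 d.
have N0 : 0 <= N := norm2_ge0 d.
pose P t := u + t *: d.
pose k t := g (P t) - t * dotv (gg u) d - Lg / 2 * t ^+ 2 * N ^+ 2.
suff : k 1 <= k 0.
  have P1 : P 1 = w by rewrite /P scale1r /d addrC subrK.
  by rewrite /k P1 /P scale0r addr0 expr1n expr0n /=; lra.
apply: local_slope_le0_le => t0 /andP[t0_ge0 _] e e_gt0.
have N1_gt0 : 0 < N + 1 by rewrite ltr_wpDl.
have LN1_gt0 : 0 < Lg * N ^+ 2 + 1 by rewrite ltr_wpDl ?mulr_ge0 ?sqr_ge0.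
have e'_gt0 : 0 < e / (2 * (N + 1)) by rewrite divr_gt0 ?mulr_gt0.
have [d0 d0_gt0 gd] := g_grad (P t0) _ e'_gt0.
exists (Num.min (d0 / (N + 1)) (e / (Lg * N ^+ 2 + 1))) => [|a b a0 ab _ t0ab].
  by rewrite lt_min !divr_gt0.
rewrite lt_min !ltr_pdivlMr // => /andP[ba_d0 ba_e].
have ba0 : 0 <= b - a by rewrite subr_ge0.
have dist_ba : norm2 ((b - a) *: d) < d0.
  by rewrite norm2Z ger0_norm //; apply: le_lt_trans ba_d0; rewrite ler_wpM2l ?lerDl.
have first_order : g (P b) - g (P a) - (b - a) * dotv (gg (P t0)) d <= e / 2 * (b - a).
  have e'N : e / (2 * (N + 1)) * norm2 ((b - a) *: d) <= e / 2 * (b - a).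
    rewrite norm2Z ger0_norm //.
    have -> : e / (2 * (N + 1)) * ((b - a) * N) = e / 2 * (b - a) * (N / (N + 1)).
      by field; rewrite gt_eqF.
    apply: ler_piMr; first by rewrite mulr_ge0 ?divr_ge0 ?(ltW e_gt0).
    by rewrite ler_pdivrMr // mul1r lerDl.
  case: t0ab => t0E; subst t0.
    have := gd (P b); rewrite /P opprD addrACA subrr add0r -scalerBl dotvZr.
    by move=> /(_ dist_ba) /ler_normlP [_]; lra.
  have := gd (P a); rewrite /P opprD addrACA subrr add0r -scalerBl dotvZr.
  rewrite -opprB scaleNr norm2N => /(_ dist_ba) /ler_normlP []; lra.
have lipschitz : dotv (gg (P t0) - gg u) d <= Lg * t0 * N ^+ 2.
  apply: le_trans (dotv_le _ _) _; rewrite expr2 mulrA; apply: ler_wpM2r => //.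
  apply: le_trans (gg_lip _ _) _.
  by rewrite /P addrAC subrr add0r norm2Z ger0_norm // mulrA.
have t0_mid : t0 - (a + b) / 2 <= (b - a) / 2 by case: t0ab => <-; lra.
have : (b - a) * (Lg * N ^+ 2) * (t0 - (a + b) / 2) <= (b - a) * (Lg * N ^+ 2) * ((b - a) / 2).
  by rewrite ler_wpM2l ?mulr_ge0 ?sqr_ge0.
have := ler_wpM2l ba0 lipschitz.
rewrite /k dotvBl; nra.
Qed.

End Descent.

Section Cocoercivity.
Variables (R : realType) (m : nat).
Implicit Types (u v w : 'cV[R]_m).

Lemma cocoercive_of_convex_smooth (phi : 'cV[R]_m -> R) dphi (L : R) : 0 <= L ->
  (forall u w, phi u + dotv (dphi u) (w - u) <= phi w) ->
  (forall u w, phi w <= phi u + dotv (dphi u) (w - u) + L / 2 * norm2 (w - u) ^+ 2) ->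
  forall u v, norm2 (dphi u - dphi v) ^+ 2 <= L * dotv (dphi u - dphi v) (u - v).
Proof.
move=> L0 convex upper u v.
set G := dphi u - dphi v; set X := dotv G (u - v).
(* Compare both bounds at the trial points v + s G and u - s G. *)
have step s : 0 < s -> (2 * s - L * s ^+ 2) * norm2 G ^+ 2 <= X.
  move=> s_gt0.
  have c1 := convex u (v + s *: G); have u1 := upper v (v + s *: G).
  have c2 := convex v (u - s *: G); have u2 := upper u (u - s *: G).
  have e1 : v + s *: G - v = s *: G by rewrite addrAC subrr add0r.
  have e2 : u - s *: G - u = - (s *: G) by rewrite addrAC subrr add0r.
  have e3 : v + s *: G - u = v - u + s *: G by rewrite addrAC.
  have e4 : u - s *: G - v = u - v - s *: G by rewrite addrAC.
  rewrite e1 norm2Z (ger0_norm (ltW s_gt0)) dotvZr exprMn in u1.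
  rewrite e2 norm2N norm2Z (ger0_norm (ltW s_gt0)) dotvNr dotvZr exprMn in u2.
  rewrite e3 dotvDr dotvZr in c1; rewrite e4 dotvBr dotvZr in c2.
  have sGG : s * dotv (dphi u) G - s * dotv (dphi v) G = s * norm2 G ^+ 2.
    by rewrite -mulrBr norm2_sqr dotvBl.
  have : X = dotv (dphi u) (u - v) - dotv (dphi v) (u - v) by rewrite /X dotvBl.
  have : dotv (dphi u) (v - u) = - dotv (dphi u) (u - v) by rewrite -dotvNr opprB.
  lra.
have [L_eq0|L_neq0] := eqVneq L 0.
  rewrite L_eq0 mul0r leNgt; apply/negP => G_gt0.
  have := step ((`|X| + 1) / norm2 G ^+ 2) (divr_gt0 (ltr_wpDl (normr_ge0 _) ltr01) G_gt0).
  rewrite L_eq0 mul0r subr0 -mulrA divfK ?gt_eqF //.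
  by have := ler_norm X; have := normr_ge0 X; lra.
have L_gt0 : 0 < L by rewrite lt0r L_neq0.
have := step L^-1; rewrite invr_gt0 -(ler_pM2l L_gt0) => /(_ L_gt0).
by have -> : L * ((2 * L^-1 - L * L^-1 ^+ 2) * norm2 G ^+ 2) = norm2 G ^+ 2 by field.
Qed.

Variables (g : 'cV[R]_m -> R) (gg : 'cV[R]_m -> 'cV[R]_m) (alpha Lg : R).
Hypotheses (g_sconvex : strongly_convex g gg alpha) (g_smooth : L_smooth g gg Lg).

Lemma sconvex_gradient_monotone u v :
  alpha * norm2 (u - v) ^+ 2 <= dotv (gg u - gg v) (u - v).
Proof.
have := g_sconvex u v; have := g_sconvex v u.
rewrite (norm2_distC v u) dotvBl (dotvC (v - u)) -(opprB u v) dotvNr dotvC; lra.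
Qed.

Lemma sconvex_le_smooth u : u != 0 -> alpha <= Lg.
Proof.
move=> u0; have u_gt0 : 0 < norm2 u ^+ 2 by rewrite exprn_gt0 ?norm2_gt0.
rewrite -(ler_pM2r u_gt0); have := sconvex_gradient_monotone u 0; rewrite subr0.
move/le_trans; apply; apply: le_trans (dotv_le _ _) _.
by rewrite expr2 mulrA ler_wpM2r ?norm2_ge0 //; have := g_smooth.2 u 0; rewrite subr0.
Qed.

(* Co-coercivity of the gradient of the convex, (Lg - alpha)-smooth g - alpha/2 |.|^2. *)
Lemma sconvex_smooth_cocoercive u v : 0 < alpha -> alpha <= Lg ->
  norm2 (gg u - gg v) ^+ 2 + alpha * Lg * norm2 (u - v) ^+ 2
    <= (Lg + alpha) * dotv (gg u - gg v) (u - v).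
Proof.
move=> alpha_gt0 alpha_Lg.
pose phi w := g w - alpha / 2 * norm2 w ^+ 2.
pose dphi w := gg w - alpha *: w.
have dphiE a b : dotv (dphi a) (b - a) = dotv (gg a) (b - a)
    - alpha / 2 * (norm2 b ^+ 2 - norm2 a ^+ 2 - norm2 (b - a) ^+ 2).
  by rewrite /dphi dotvBl dotvZl norm2_sqrB !dotvBr (dotvC b a) !norm2_sqr; field.
have descent := smooth_descent (le_trans (ltW alpha_gt0) alpha_Lg) g_smooth.
have convex a b : phi a + dotv (dphi a) (b - a) <= phi b.
  by rewrite dphiE /phi; have := g_sconvex a b; rewrite (dotvC (b - a)); lra.
have upper a b :
    phi b <= phi a + dotv (dphi a) (b - a) + (Lg - alpha) / 2 * norm2 (b - a) ^+ 2.
  by rewrite dphiE /phi; have := descent a b; lra.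
have := cocoercive_of_convex_smooth _ convex upper u v; rewrite subr_ge0 => /(_ alpha_Lg).
have -> : dphi u - dphi v = (gg u - gg v) - alpha *: (u - v).
  by apply/matrixP => i j; rewrite !mxE; ring.
rewrite (norm2_sqrB (gg u - gg v)) (dotvBl (gg u - gg v)) norm2Z !dotvZl dotvZr.
by rewrite -norm2_sqr exprMn ger0_norm ?(ltW alpha_gt0); lra.
Qed.

End Cocoercivity.

Lemma ler_sqrtrM_sqr (R : realType) (a x y : R) : 0 <= x -> 0 <= y ->
  x ^+ 2 <= a * y ^+ 2 -> x <= Num.sqrt a * y.
Proof.
move=> x0 y0 xy; have [a0|a_lt0] := lerP 0 a.
  by rewrite -(ler_pXn2r (n := 2)) ?nnegrE ?mulr_ge0 ?sqrtr_ge0 // exprMn sqr_sqrtr.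
have : x ^+ 2 <= 0 by apply: le_trans xy _; rewrite nmulr_rle0 ?sqr_ge0.
rewrite (ler0_sqrtr (ltW a_lt0)) mul0r => x2_le0.
by have -> : x = 0 by apply/eqP; rewrite -sqrf_eq0 eq_le x2_le0 sqr_ge0.
Qed.

Lemma gradient_step_contraction (R : realType) m p (gg : 'cV[R]_m -> 'cV[R]_m)
    (H : 'M[R]_(m, p)) (alpha Lg cH mu : R) (y z : 'cV[R]_p) :
  0 < alpha -> alpha <= Lg -> 0 < mu -> 0 <= cH ->
  (forall u v, norm2 (gg u - gg v) ^+ 2 + alpha * Lg * norm2 (u - v) ^+ 2
                 <= (Lg + alpha) * dotv (gg u - gg v) (u - v)) ->
  mu * opnorm H ^+ 2 <= 2 / (Lg + alpha) ->
  cH * norm2 (y - z) ^+ 2 <= norm2 (H *m y - H *m z) ^+ 2 ->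
  H^T *m gg (H *m z) = 0 ->
  norm2 (y - mu *: (H^T *m gg (H *m y)) - z)
    <= Num.sqrt (1 - 2 * Lg * alpha * cH / (Lg + alpha) * mu) * norm2 (y - z).
Proof.
move=> alpha_gt0 alpha_Lg mu_gt0 cH0 interp mu_small Hyz z_crit.
have s_gt0 : 0 < Lg + alpha by lra.
apply: ler_sqrtrM_sqr; rewrite ?norm2_ge0 //.
set G := gg (H *m y) - gg (H *m z).
have -> : y - mu *: (H^T *m gg (H *m y)) - z = (y - z) - mu *: (H^T *m G).
  by rewrite /G mulmxBr z_crit subr0 addrAC.
rewrite (norm2_sqrB (y - z)) dotvZr norm2Z (ger0_norm (ltW mu_gt0)) exprMn.
rewrite dotvC dotv_trmxl mulmxBr.
have HTG : mu * norm2 (H^T *m G) ^+ 2 <= 2 / (Lg + alpha) * norm2 G ^+ 2.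
  apply: le_trans (_ : mu * (opnorm H ^+ 2 * norm2 G ^+ 2) <= _).
    rewrite ler_wpM2l ?(ltW mu_gt0) // -exprMn ler_pXn2r ?nnegrE ?mulr_ge0 ?norm2_ge0 //.
      exact: norm2_trmx_mulmx_le.
    exact: opnorm_ge0.
  by rewrite mulrA ler_wpM2r ?sqr_ge0.
have := interp (H *m y) (H *m z); rewrite -/G.
set P := dotv G _; set h2 := norm2 (H *m y - H *m z) ^+ 2 in Hyz * => GP.
have {}GP : 2 * Lg * alpha / (Lg + alpha) * h2 + 2 / (Lg + alpha) * norm2 G ^+ 2 <= 2 * P.
  have := ler_wpM2l (ltW (divr_gt0 (ltr0Sn _ 1) s_gt0)) GP.
  have -> : 2 / (Lg + alpha) * ((Lg + alpha) * P) = 2 * P by field; rewrite gt_eqF.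
  lra.
have hcH : 2 * Lg * alpha * cH / (Lg + alpha) * norm2 (y - z) ^+ 2
    <= 2 * Lg * alpha / (Lg + alpha) * h2.
  have k0 : 0 <= 2 * Lg * alpha / (Lg + alpha).
    by apply: divr_ge0; [apply: mulr_ge0; [apply: mulr_ge0|] | ]; lra.
  by have := ler_wpM2l k0 Hyz; lra.
have : mu ^+ 2 * norm2 (H^T *m G) ^+ 2 <= mu * (2 / (Lg + alpha) * norm2 G ^+ 2).
  by rewrite expr2 -mulrA ler_wpM2l ?(ltW mu_gt0).
have := ler_wpM2l (ltW mu_gt0) hcH; have := ler_wpM2l (ltW mu_gt0) GP.
lra.
Qed.

Section Recursion.
Variables (R : realType) (A B : nat -> R) (q b t mu L D Rr gam : R).
Hypotheses (A_ge0 : forall k, 0 <= A k) (B_ge0 : forall k, 0 <= B k).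
Hypotheses (q_ge0 : 0 <= q) (q_lt1 : q < 1) (b_ge0 : 0 <= b) (b_lt1 : b < 1).
Hypotheses (mu_gt0 : 0 < mu) (L_gt0 : 0 < L) (D_ge0 : 0 <= D) (tE : t = mu * L).
Hypotheses (gamE : gam = (1 - q) / t) (gam_le1 : gam <= 1).
Hypothesis den_gt0 : 0 < gam - (t + gam * (1 + t)) * b.
Hypothesis RrE :
  Rr = Num.max (A 0) (Num.max (B 0 / gam) (mu * D * b / (gam - (t + gam * (1 + t)) * b))).
Hypotheses (A_step : forall k, A k.+1 <= q * A k + t * B k)
  (B_step : forall k, B k.+1 <= b * (B k + mu * (L * (B k + A k) + D))).

Let t_gt0 : 0 < t. Proof. by rewrite tE mulr_gt0. Qed.
Let gam_gt0 : 0 < gam. Proof. by rewrite gamE divr_gt0 ?subr_gt0. Qed.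
Let gam_t : gam * t = 1 - q. Proof. by rewrite gamE divfK ?gt_eqF. Qed.
Let A0_le : A 0 <= Rr. Proof. by rewrite RrE le_max lexx. Qed.
Let Rr_ge0 : 0 <= Rr. Proof. exact: le_trans (A_ge0 0) A0_le. Qed.

Let B0_le : B 0 <= gam * Rr.
Proof. by rewrite mulrC -ler_pdivrMr // RrE !le_max lexx orbT. Qed.

Let D_le : mu * D * b <= Rr * (gam - (t + gam * (1 + t)) * b).
Proof. by rewrite -ler_pdivrMr // RrE !le_max lexx !orbT. Qed.

Let recursion_invariant k : A k <= Rr /\ B k <= gam * Rr.
Proof.
elim: k => [//|k [Ak Bk]]; have A0 := A_ge0 k; have B0 := B_ge0 k; split.
  apply: le_trans (A_step k) _.
  have : t * (gam * Rr) = (1 - q) * Rr by rewrite -gam_t; ring.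
  have := ler_wpM2l q_ge0 Ak; have := ler_wpM2l (ltW t_gt0) Bk; lra.
have := B_step k; rewrite (mulrDr mu) (mulrA mu) -tE => /le_trans; apply.
have := ler_wpM2l (ltW t_gt0) Bk; have := ler_wpM2l (ltW t_gt0) Ak => tA tB.
have : B k + (t * (B k + A k) + mu * D) <= (1 + t) * (gam * Rr) + t * Rr + mu * D by lra.
by move/(ler_wpM2l b_ge0); have := D_le; lra.
Qed.

Let E := mu * b * (2 * L * Rr + D) / (1 - b).

Let E_ge0 : 0 <= E.
Proof.
rewrite /E divr_ge0 ?subr_ge0 ?(ltW b_lt1) //.
by rewrite !mulr_ge0 ?addr_ge0 ?mulr_ge0 ?(ltW mu_gt0) ?(ltW L_gt0).
Qed.

Let B_step_affine k : B k.+1 <= b * B k + (1 - b) * E.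
Proof.
have [Ak Bk] := recursion_invariant k.
have -> : (1 - b) * E = b * (mu * (2 * L * Rr + D)).
  by rewrite /E; field; rewrite subr_eq0 gt_eqF.
apply: le_trans (B_step k) _; rewrite -mulrDr ler_wpM2l //.
have gamRr : gam * Rr <= Rr by rewrite ler_piMl.
have : L * (B k + A k) <= L * (2 * Rr) by apply: ler_wpM2l; [exact: ltW | lra].
by move/(ler_wpM2l (ltW mu_gt0)); lra.
Qed.

Let recursion_B_bound k : B k <= b ^+ k * B 0 + E.
Proof.
elim: k => [|k IHk]; first by rewrite expr0 mul1r lerDl.
by apply: le_trans (B_step_affine k) _; have := ler_wpM2l b_ge0 IHk; rewrite exprS; lra.
Qed.

Let geom_le k : \sum_(i < k) b ^+ i.+1 <= b / (1 - b).
Proof.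
have geom : (1 - b) * \sum_(i < k) b ^+ i = 1 - b ^+ k.
  by rewrite -opprB mulNr -subrX1 opprB.
rewrite ler_pdivlMr ?subr_gt0 //.
under eq_bigr do rewrite exprS.
rewrite -mulr_sumr -mulrA (mulrC _ (1 - b)) geom ler_piMr //.
by rewrite lerBlDr lerDl exprn_ge0.
Qed.

Let recursion_A_geom k : A k.+1 <= q ^+ k.+1 * A 0 + q ^+ k * (t * B 0)
  + t * B 0 * \sum_(i < k) b ^+ i.+1 + t * E / (1 - q).
Proof.
have tE_q : q * (t * E / (1 - q)) + t * E = t * E / (1 - q).
  by field; rewrite subr_eq0 gt_eqF.
have tEq_ge0 : 0 <= t * E / (1 - q).
  by rewrite divr_ge0 ?subr_ge0 ?(ltW q_lt1) // mulr_ge0 ?(ltW t_gt0).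
elim: k => [|k IHk].
  by apply: le_trans (A_step 0) _; rewrite big_ord0 mulr0 expr1 expr0 mul1r; lra.
apply: le_trans (A_step k.+1) _; rewrite big_ord_recr /=.
have tB0_sum : 0 <= t * B 0 * \sum_(i < k) b ^+ i.+1.
  by rewrite !mulr_ge0 ?(ltW t_gt0) ?sumr_ge0 // => i _; rewrite exprn_ge0.
have := ler_wpM2l q_ge0 IHk; have := ler_wpM2l (ltW t_gt0) (recursion_B_bound k.+1).
have := ler_piMl tB0_sum (ltW q_lt1); rewrite !exprS; lra.
Qed.

Let recursion_A_bound k : A k.+1 <= q ^+ k * (A 0 + t * B 0)
  + t * b / (1 - b) * (mu * (2 * L * Rr + D) / (1 - q) + B 0).
Proof.
apply: le_trans (recursion_A_geom k) _.
have -> : t * b / (1 - b) * (mu * (2 * L * Rr + D) / (1 - q) + B 0)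
    = t * E / (1 - q) + t * B 0 * (b / (1 - b)).
  by rewrite /E; field; rewrite !subr_eq0 !gt_eqF.
have := ler_wpM2l (mulr_ge0 (ltW t_gt0) (B_ge0 0)) (geom_le k).
have := ler_wpM2r (A_ge0 0) (ler_piMl (exprn_ge0 k q_ge0) (ltW q_lt1)).
rewrite exprS; lra.
Qed.

Lemma recursion_bounds k :
  A k.+1 <= q ^+ k * (A 0 + t * B 0)
            + t * b / (1 - b) * (mu * (2 * L * Rr + D) / (1 - q) + B 0)
  /\ B k <= b ^+ k * B 0 + mu * b * (2 * L * Rr + D) / (1 - b).
Proof. by split; [apply: recursion_A_bound | apply: recursion_B_bound]. Qed.

End Recursion.

Section StepSize.
Variables (R : realType) (alpha Lg cH CH mu L b : R).
Hypotheses (alpha_gt0 : 0 < alpha) (alpha_Lg : alpha <= Lg) (cH_gt0 : 0 < cH).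
Hypotheses (mu_gt0 : 0 < mu) (L_gt0 : 0 < L) (mu_small : mu <= 2 * CH / (Lg + alpha)).
Hypotheses (cH_CH : cH * CH <= 1) (alpha_cH : alpha * cH <= L) (b_ge0 : 0 <= b).

Local Notation C2 := (2 * Lg * alpha * cH / (Lg + alpha)).
Local Notation q := (Num.sqrt (1 - C2 * mu)).
Local Notation gamma := ((1 - q) / (mu * L)).

Hypothesis step_small : mu * (L * b) * (C2 + L * (1 + Num.sqrt 2)) <= C2 * (1 - b).

Let s_gt0 : 0 < Lg + alpha. Proof. by have := alpha_gt0; have := alpha_Lg; lra. Qed.
Let Lg_gt0 : 0 < Lg. Proof. exact: lt_le_trans alpha_gt0 alpha_Lg. Qed.

Let mu_s : mu * (Lg + alpha) <= 2 * CH.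
Proof. by rewrite -ler_pdivlMr. Qed.

Let C2_gt0 : 0 < C2.
Proof. by rewrite divr_gt0 // !mulr_gt0. Qed.

Let c_gt0 : 0 < C2 * mu. Proof. exact: mulr_gt0. Qed.

Let c_le1 : C2 * mu <= 1.
Proof.
have amgm : 4 * Lg * alpha <= (Lg + alpha) ^+ 2.
  by have := sqr_ge0 (Lg - alpha); rewrite sqrrB sqrrD; lra.
have cE : C2 * mu * (Lg + alpha) ^+ 2 = 2 * Lg * alpha * cH * (mu * (Lg + alpha)).
  by field; rewrite gt_eqF.
have LgacH : 0 <= 2 * Lg * alpha * cH by rewrite !mulr_ge0 ?ltW.
have := ler_wpM2l LgacH mu_s.
have := ler_piMr (mulr_ge0 (mulr_ge0 (ler0n _ 4) (ltW Lg_gt0)) (ltW alpha_gt0)) cH_CH.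
move=> h1 h2; rewrite -(ler_pM2r (exprn_gt0 2 s_gt0)) mul1r cE; lra.
Qed.

Lemma contraction_rate_ge0_lt1 : 0 <= q < 1.
Proof.
rewrite sqrtr_ge0 -[X in _ < X]sqrtr1 ltr_sqrt ?ltr01 //.
by have := c_gt0; lra.
Qed.

Let q_le : q <= 1 - C2 * mu / 2.
Proof.
have c0 := c_gt0; have c1 := c_le1.
rewrite -(ler_pXn2r (n := 2)) ?nnegrE ?sqrtr_ge0 //; last lra.
by rewrite sqr_sqrtr ?subr_ge0 // sqrrB; have := sqr_ge0 (C2 * mu / 2); lra.
Qed.

Let one_sub_q_le : 1 - q <= mu * L.
Proof.
set r := mu * alpha * cH.
have r_le : r <= mu * L by rewrite /r -mulrA; apply: ler_wpM2l => //; exact: ltW.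
have rE : (1 - r) ^+ 2 - (1 - C2 * mu)
    = mu * alpha ^+ 2 * cH / (Lg + alpha) * (cH * (mu * (Lg + alpha)) - 2).
  by rewrite /r; field; rewrite gt_eqF.
have cH_mu : cH * (mu * (Lg + alpha)) <= 2.
  by have := ler_wpM2l (ltW cH_gt0) mu_s; have := cH_CH; lra.
have : (1 - r) ^+ 2 <= 1 - C2 * mu.
  rewrite -subr_le0 rE pmulr_rle0 ?subr_le0 //.
  by rewrite divr_gt0 // !mulr_gt0 // exprn_gt0.
move=> /ler_wsqrtr; rewrite sqrtr_sqr => /(le_trans (ler_norm _)); lra.
Qed.

Lemma gamma_le1 : gamma <= 1.
Proof. by rewrite ler_pdivrMr ?mulr_gt0 // mul1r one_sub_q_le. Qed.

Let gammaM : gamma * (mu * L) = 1 - q.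
Proof. by rewrite divfK // gt_eqF ?mulr_gt0. Qed.

Lemma step_small_lt1 : b < 1.
Proof.
rewrite ltNge; apply/negP => b_ge1.
have b_gt0 : 0 < b := lt_le_trans ltr01 b_ge1.
have : 0 < C2 + L * (1 + Num.sqrt 2) by rewrite addr_gt0 // mulr_gt0 // ltr_wpDr ?sqrtr_ge0.
move=> /(mulr_gt0 (mulr_gt0 mu_gt0 (mulr_gt0 L_gt0 b_gt0))).
have : C2 * (1 - b) <= 0 by rewrite pmulr_rle0 // subr_le0.
by have := step_small; lra.
Qed.

(* Strict because (1 + sqrt 2) / 2 > 1 in the step-size condition. *)
Lemma radius_den_gt0 : 0 < gamma - (mu * L + gamma * (1 + mu * L)) * b.
Proof.
have t_gt0 : 0 < mu * L by rewrite mulr_gt0.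
rewrite -(pmulr_lgt0 _ t_gt0).
have -> : (gamma - (mu * L + gamma * (1 + mu * L)) * b) * (mu * L)
    = (1 - q) * (1 - b - b * (mu * L)) - (mu * L) ^+ 2 * b.
  by move: gammaM; generalize gamma => G <-; ring.
have sqrt2_gt1 : 1 < Num.sqrt (2 : R) by rewrite -[X in X < _]sqrtr1 ltr_sqrt ?ltr1n.
have cond : (mu * L) ^+ 2 * b * (1 + Num.sqrt 2) <= C2 * mu * (1 - b - b * (mu * L)).
  by have := ler_wpM2l (ltW mu_gt0) step_small; nra.
have c_half : C2 * mu / 2 <= 1 - q by have := q_le; lra.
have tb0 : 0 <= (mu * L) ^+ 2 * b by rewrite mulr_ge0 ?sqr_ge0.
have bt0 : 0 <= 1 - b - b * (mu * L).
  rewrite -(pmulr_rge0 _ c_gt0); apply: le_trans cond.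
  by rewrite mulr_ge0 ?addr_ge0 ?sqrtr_ge0.
have [_ q_lt1] := andP contraction_rate_ge0_lt1.
have [->|b_neq0] := eqVneq b 0; first by rewrite !(mulr0, mul0r, subr0) mulr1; lra.
have tb_gt0 : 0 < (mu * L) ^+ 2 * b.
  by rewrite lt0r tb0 andbT mulf_neq0 // expf_neq0 // gt_eqF.
have := mulr_gt0 tb_gt0 (_ : 0 < Num.sqrt 2 - 1); rewrite subr_gt0 => /(_ sqrt2_gt1).
have := ler_wpM2r bt0 c_half; lra.
Qed.

End StepSize.

Section NearDGD.
Variables (R : realType) (n p m : nat) (W : 'M[R]_n).
Variables (f : 'I_n -> 'cV[R]_p -> R) (gf : 'I_n -> 'cV[R]_p -> 'cV[R]_p) (Li : 'I_n -> R).
Variables (g : 'cV[R]_m -> R) (gg : 'cV[R]_m -> 'cV[R]_m) (alpha Lg : R).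
Variables (H : 'M[R]_(m, p)) (proj : 'cV[R]_p -> 'cV[R]_p) (cH : R).
Variables (J : nat) (mu : R) (x : nat -> 'I_n -> 'cV[R]_p).

Local Notation F := (fun y => (n%:R)^-1 * \sum_(i < n) f i y).
Local Notation Xs := (minimizers F).
Local Notation L := (\big[Num.max/0]_(i < n) Li i).
Local Notation CH := ((opnorm H ^+ 2)^-1).
Local Notation Dset := [set Num.sqrt (\sum_(j < n) norm2 (gf j y) ^+ 2) | y in Xs].

Hypotheses (n_gt0 : (0 < n)%N) (Li_gt0 : forall i, 0 < Li i).
Hypothesis f_smooth : forall i, L_smooth (f i) (gf i) (Li i).
Hypotheses (alpha_gt0 : 0 < alpha) (g_sconvex : strongly_convex g gg alpha).
Hypothesis g_smooth : L_smooth g gg Lg.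
Hypothesis F_gH : forall y, F y = g (H *m y).
Hypothesis proj_Xs : forall y, is_proj Xs y (proj y).
Hypothesis hoffman :
  forall y, cH * norm2 (y - proj y) ^+ 2 <= norm2 (H *m y - H *m proj y) ^+ 2.
Hypotheses (mu_gt0 : 0 < mu) (mu_small : mu <= 2 * CH / (Lg + alpha)).

Lemma Li_le_L i : Li i <= L.
Proof. by rewrite (bigD1 i) //= le_max lexx. Qed.

Lemma L_gt0 : 0 < L.
Proof. exact: lt_le_trans (Li_gt0 (Ordinal n_gt0)) (Li_le_L _). Qed.

Let gf_lipschitz i y z : norm2 (gf i y - gf i z) <= L * norm2 (y - z).
Proof.
apply: le_trans ((f_smooth i).2 y z) _.
by rewrite ler_wpM2r ?norm2_ge0 ?Li_le_L.
Qed.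

Let F_grad : is_gradient F (fun y => (n%:R)^-1 *: \sum_i gf i y).
Proof. by apply: is_gradient_avg => // i; case: (f_smooth i). Qed.

Let gH_grad : is_gradient (fun y => g (H *m y)) (fun y => H^T *m gg (H *m y)).
Proof. by apply: is_gradient_comp; case: g_smooth. Qed.

Lemma avg_gradientE y : avg (fun i => gf i y) = H^T *m gg (H *m y).
Proof.
have FE : F = (fun y => g (H *m y)) := funext F_gH.
by have := gH_grad; rewrite -FE => /(is_gradient_unique y F_grad).
Qed.

Lemma gradient_eq0_minimizers z : Xs z -> H^T *m gg (H *m z) = 0.
Proof. by move=> z_min; apply: gradient_eq0_of_min gH_grad => y; rewrite -!F_gH. Qed.

Lemma opnorm_H_gt0 : 0 < opnorm H.
Proof.
rewrite lt_neqAle opnorm_ge0 andbT eq_sym; apply/eqP => H0.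
by move: mu_small; rewrite H0 expr0n /= invr0 mulr0 mul0r leNgt mu_gt0.
Qed.

Lemma alpha_le_Lg : alpha <= Lg.
Proof.
have [y Hy0] := opnorm_gt0 opnorm_H_gt0.
exact (sconvex_le_smooth g_sconvex g_smooth Hy0).
Qed.

(* Strong convexity of g rules out X* = R^p, since H <> 0. *)
Lemma exists_nonminimizer : exists y, y != proj y.
Proof.
apply: contrapT => all_proj.
have Xs_all y : Xs y.
  have [<-|yp] := eqVneq (proj y) y; first exact: (proj_Xs y).1.
  by case: all_proj; exists y; rewrite eq_sym.
have [y Hy0] := opnorm_gt0 opnorm_H_gt0.
have := Xs_all y 0; have := Xs_all (- y) 0; rewrite /= !F_gH mulmx0 mulmxN.
have := g_sconvex 0 (H *m y); have := g_sconvex 0 (- (H *m y)).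
rewrite !subr0 dotvNl norm2N.
have := mulr_gt0 alpha_gt0 (exprn_gt0 2 (norm2_gt0 Hy0)); lra.
Qed.

Lemma cH_CH_le1 : cH * CH <= 1.
Proof.
have [y yp] := exists_nonminimizer.
have d_gt0 : 0 < norm2 (y - proj y) ^+ 2 by rewrite exprn_gt0 // norm2_gt0 // subr_eq0.
rewrite ler_pdivrMr ?exprn_gt0 ?opnorm_H_gt0 // mul1r -(ler_pM2r d_gt0).
apply: le_trans (hoffman y) _.
rewrite -mulmxBr -exprMn ler_pXn2r ?nnegrE ?mulr_ge0 ?norm2_ge0 ?opnorm_ge0 //.
exact: norm2_mulmx_le.
Qed.

Lemma alpha_cH_le_L : alpha * cH <= L.
Proof.
have [y yp] := exists_nonminimizer; set z := proj y in yp *; set d := y - z.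
have d_gt0 : 0 < norm2 d ^+ 2 by rewrite exprn_gt0 // norm2_gt0 // subr_eq0.
have mono := sconvex_gradient_monotone g_sconvex (H *m y) (H *m z).
rewrite -mulmxBr -dotv_trmxl (mulmxBr H^T) -!avg_gradientE -avgB -/d in mono.
have lip : norm2 (avg (fun i => gf i y - gf i z)) <= L * norm2 d.
  have sn_gt0 : 0 < Num.sqrt (n%:R : R) by rewrite sqrtr_gt0 ltr0n.
  rewrite -(ler_pM2l sn_gt0) mulrCA -[Num.sqrt _ * norm2 d]snorm_cst.
  apply: le_trans (sqrtn_norm2_avg_le (fun i => gf i y - gf i z)) _.
  by apply: snorm_lipschitz => [|i]; [exact: ltW L_gt0 | exact: gf_lipschitz].
have := ler_wpM2l (ltW alpha_gt0) (hoffman y); rewrite -/z -mulmxBr -/d.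
have := dotv_le (avg (fun i => gf i y - gf i z)) d.
have := ler_wpM2r (norm2_ge0 d) lip.
move=> h1 h2 h3; rewrite -(ler_pM2r d_gt0).
by rewrite !expr2 in h3 mono *; lra.
Qed.

Hypotheses (Xs_neq0 : Xs !=set0) (Dset_ub : has_ubound Dset).
Local Notation D := (sup Dset).

Let Dset_sup : has_sup Dset.
Proof. by split => //; have [z z_min] := Xs_neq0; exists (snorm (fun j => gf j z)), z. Qed.

Lemma snorm_gradient_le_D z : Xs z -> snorm (fun j => gf j z) <= D.
Proof.
by move=> z_min; have /(sup_upper_bound Dset_sup) : Dset (snorm (fun j => gf j z)) by exists z.
Qed.

Lemma D_ge0 : 0 <= D.
Proof. by have [z /snorm_gradient_le_D] := Xs_neq0; apply: le_trans (snorm_ge0 _). Qed.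

Hypotheses (cH_gt0 : 0 < cH) (W_ds : doubly_stochastic W).
Hypothesis dgd : near_dgd_plus W (fun _ => J) mu gf x.

Local Notation xbar k := (avg (x k)).
Local Notation A k := (snorm (fun _ : 'I_n => xbar k - proj (xbar k))).
Local Notation B k := (snorm (fun i => xbar k - x k i)).

Let next_iterate k : x k.+1 = kronI (W ^+ J) (fun j => x k j - mu *: gf j (x k j)).
Proof. by apply: funext => i; apply: dgd. Qed.

Let avg_next k : xbar k.+1 = xbar k - mu *: avg (fun j => gf j (x k j)).
Proof.
by rewrite next_iterate avg_kronI_pow // /avg sumrB scalerBr -scaler_sumr !scalerA mulrC.
Qed.

Let mu_opnorm : mu * opnorm H ^+ 2 <= 2 / (Lg + alpha).
Proof.
have o_gt0 : 0 < opnorm H ^+ 2 by rewrite exprn_gt0 // opnorm_H_gt0.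
by move: mu_small; rewrite -ler_pdivlMr // mulrAC.
Qed.

Lemma near_dgd_A_step k :
  A k.+1 <= Num.sqrt (1 - 2 * Lg * alpha * cH / (Lg + alpha) * mu) * A k + mu * L * B k.
Proof.
set z := proj (xbar k); have z_min : Xs z := (proj_Xs (xbar k)).1.
set Q := avg (fun j => gf j (x k j) - gf j (xbar k)).
have xbar_next : xbar k.+1 - z = (xbar k - mu *: (H^T *m gg (H *m xbar k)) - z) - mu *: Q.
  rewrite avg_next /Q avgB avg_gradientE.
  by apply/matrixP => i j; rewrite !mxE; ring.
have contraction := gradient_step_contraction alpha_gt0 alpha_le_Lg mu_gt0 (ltW cH_gt0)
  (fun u v => sconvex_smooth_cocoercive g_sconvex g_smooth u v alpha_gt0 alpha_le_Lg)
  mu_opnorm (hoffman (xbar k)) (gradient_eq0_minimizers z_min).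
have Q_le : Num.sqrt n%:R * norm2 Q <= L * B k.
  apply: le_trans (sqrtn_norm2_avg_le _) _; rewrite snorm_distC.
  by apply: snorm_lipschitz => [|j]; [exact: ltW L_gt0 | exact: gf_lipschitz].
rewrite !snorm_cst; apply: le_trans (ler_wpM2l (sqrtr_ge0 _) ((proj_Xs _).2 z z_min)) _.
rewrite xbar_next; apply: le_trans (ler_wpM2l (sqrtr_ge0 _) (ler_norm2D _ _)) _.
rewrite norm2N norm2Z gtr0_norm //.
have := ler_wpM2l (sqrtr_ge0 n%:R) contraction; have := ler_wpM2l (ltW mu_gt0) Q_le.
lra.
Qed.

Lemma near_dgd_B_step k : (0 < J)%N ->
  B k.+1 <= opnorm (W - (n%:R)^-1 *: const_mx 1) ^+ J * (B k + mu * (L * (B k + A k) + D)).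
Proof.
move=> J_gt0; set y := fun j => x k j - mu *: gf j (x k j).
rewrite next_iterate; apply: le_trans (snorm_consensus_le n_gt0 W_ds y (xbar k) J_gt0) _.
apply: ler_wpM2l; first exact/exprn_ge0/opnorm_ge0.
set z := proj (xbar k); have z_min : Xs z := (proj_Xs (xbar k)).1.
have -> : (fun i => y i - xbar k) = fun i => (x k i - xbar k) + (- mu) *: gf i (x k i).
  by apply: funext => i; rewrite /y scaleNr addrAC.
apply: le_trans (snormD _ _) _; rewrite snormZ normrN gtr0_norm // snorm_distC.
apply: lerD => //; apply: ler_wpM2l; first exact: ltW.
have -> : (fun i => gf i (x k i)) = fun i => (gf i (x k i) - gf i z) + gf i z.
  by apply: funext => i; rewrite subrK.
apply: le_trans (snormD _ _) (lerD _ (snorm_gradient_le_D z_min)).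
apply: le_trans (snorm_lipschitz (ltW L_gt0) (fun i => gf_lipschitz i (x k i) z)) _.
apply: ler_wpM2l; first exact: ltW L_gt0.
have -> : (fun i => x k i - z) = fun i => (x k i - xbar k) + (xbar k - z).
  by apply: funext => i; rewrite addrA subrK.
by apply: le_trans (snormD _ _) _; rewrite snorm_distC.
Qed.

End NearDGD.

Unset Implicit Arguments.

Theorem theorem2p11 (R : realType) (n p m : nat) (n_gt0 : (0 < n)%N)
  (W : 'M[R]_n)
  (f : 'I_n -> 'cV[R]_p -> R) (gf : 'I_n -> 'cV[R]_p -> 'cV[R]_p) (Li : 'I_n -> R)
  (g : 'cV[R]_m -> R) (gg : 'cV[R]_m -> 'cV[R]_m) (alpha Lg : R)
  (H : 'M[R]_(m, p)) (proj : 'cV[R]_p -> 'cV[R]_p) (cH : R)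
  (J : nat) (mu : R) (x : nat -> 'I_n -> 'cV[R]_p) :
  doubly_stochastic W -> strongly_connected_selfloops W ->
  let beta := opnorm (W - (n%:R)^-1 *: const_mx 1) in
  beta < 1 ->
  (forall i, 0 < Li i) -> (forall i, L_smooth (f i) (gf i) (Li i)) ->
  let F := fun y => (n%:R)^-1 * \sum_(i < n) f i y in
  0 < alpha -> strongly_convex g gg alpha -> L_smooth g gg Lg ->
  (forall y, F y = g (H *m y)) ->
  let Xs := minimizers F in
  Xs !=set0 ->
  (forall y, is_proj Xs y (proj y)) ->
  0 < cH ->
  (forall y, cH * norm2 (y - proj y) ^+ 2 <= norm2 (H *m y - H *m proj y) ^+ 2) ->
  let Dset := [set Num.sqrt (\sum_(j < n) norm2 (gf j y) ^+ 2) | y in Xs] in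
  has_ubound Dset ->
  let D := sup Dset in
  let L := \big[Num.max/0]_(i < n) Li i in
  let C2 := 2 * Lg * alpha * cH / (Lg + alpha) in
  let CH := (opnorm H ^+ 2)^-1 in
  0 < mu -> mu <= 2 * CH / (Lg + alpha) ->
  mu * (L * beta ^+ J) * (C2 + L * (1 + Num.sqrt 2)) <= C2 * (1 - beta ^+ J) ->
  near_dgd_plus W (fun _ => J) mu gf x ->
  let xbar := fun k => avg (x k) in
  let A0 := snorm (fun _ : 'I_n => xbar 0%N - proj (xbar 0%N)) in
  let B0 := snorm (fun i => xbar 0%N - x 0%N i) in
  let q := Num.sqrt (1 - C2 * mu) in
  let gamma := (1 - q) / (mu * L) in
  let Rr := Num.max A0 (Num.max (B0 / gamma)
              (mu * D * beta ^+ J / (gamma - (mu * L + gamma * (1 + mu * L)) * beta ^+ J))) in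
  forall k : nat,
    snorm (fun _ : 'I_n => xbar k.+1 - proj (xbar k.+1))
      <= q ^+ k * (A0 + mu * L * B0)
         + mu * L * beta ^+ J / (1 - beta ^+ J)
           * (mu * (2 * L * Rr + D) / (1 - q) + B0)
    /\ snorm (fun i => xbar k - x k i)
      <= (beta ^+ J) ^+ k * B0 + mu * beta ^+ J * (2 * L * Rr + D) / (1 - beta ^+ J).
Proof.
move=> W_ds _ beta _ Li_gt0 f_smooth F alpha_gt0 g_sconvex g_smooth F_gH Xs Xs_neq0
  proj_Xs cH_gt0 hoffman Dset Dset_ub D L C2 CH mu_gt0 mu_small step_small dgd
  xbar A0 B0 q gamma Rr k.
have L_gt0 := L_gt0 n_gt0 Li_gt0.
have alpha_Lg := alpha_le_Lg g_sconvex g_smooth mu_gt0 mu_small.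
have cH_CH := cH_CH_le1 alpha_gt0 g_sconvex F_gH proj_Xs hoffman mu_gt0 mu_small.
have alpha_cH := alpha_cH_le_L n_gt0 Li_gt0 f_smooth alpha_gt0 g_sconvex g_smooth
  F_gH proj_Xs hoffman mu_gt0 mu_small.
have b_ge0 : 0 <= beta ^+ J := exprn_ge0 _ (opnorm_ge0 _).
have b_lt1 := step_small_lt1 alpha_gt0 alpha_Lg cH_gt0 mu_gt0 L_gt0 step_small.
have J_gt0 : (0 < J)%N by rewrite lt0n; apply: contraTneq b_lt1 => ->; rewrite expr0 ltxx.
have [q_ge0 q_lt1] := andP (contraction_rate_ge0_lt1 alpha_gt0 alpha_Lg cH_gt0 mu_gt0).
have gamma_le1 := gamma_le1 alpha_gt0 alpha_Lg cH_gt0 mu_gt0 L_gt0 mu_small cH_CH alpha_cH.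
have den_gt0 := radius_den_gt0 alpha_gt0 alpha_Lg cH_gt0 mu_gt0 L_gt0 mu_small cH_CH
  b_ge0 step_small.
have D_ge0 := D_ge0 Xs_neq0 Dset_ub.
have A_step := near_dgd_A_step n_gt0 Li_gt0 f_smooth alpha_gt0 g_sconvex g_smooth F_gH
  proj_Xs hoffman mu_gt0 mu_small cH_gt0 W_ds dgd.
have B_step k' := near_dgd_B_step n_gt0 Li_gt0 f_smooth proj_Xs mu_gt0 Xs_neq0 Dset_ub
  W_ds dgd k' J_gt0.
exact: (recursion_bounds (fun _ => snorm_ge0 _) (fun _ => snorm_ge0 _) q_ge0 q_lt1 b_ge0
  b_lt1 mu_gt0 L_gt0 D_ge0 erefl erefl gamma_le1 den_gt0 erefl A_step B_step).
Qed.
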